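(* With the notation of the context, if $B\subseteq H$ is a set that is non-meager with respect to $\tau$ and has the Baire property with respect to $\tau$, then for every $m\in\omega$ there are distinct $x,y\in P_m$ such that $(B+x)\cap(B+y)\neq\emptyset$.
   Context: Work in $2^\omega$ with coordinatewise addition mod 2 (also used for finite 0-1 sequences of equal domain). Fix integers $0=n_0<n_1<n_2<\cdots$ and sets $C_i\subseteq 2^{[n_i,n_{i+1})}$ such that for every $i$ and all $s_0,\ldots,s_{n_i}\in 2^{[n_i,n_{i+1})}$ both $\bigcap_{k\le n_i}(C_i+s_k)$ and $\bigcap_{k\le n_i}((2^{[n_i,n_{i+1})}\setminus C_i)+s_k)$ are nonempty. Let $H=\{x\in 2^\omega: x\restriction[n_i,n_{i+1})\in C_i \text{ for all } i\}$. Fix a sequence $\langle P_m:m\in\omega\rangle$ of nonempty perfect subsets of $2^\omega$; let $P_m^*=\{x+y:x,y\in P_m\}$ and $T_m^*=\{x\restriction k: x\in P_m^*, k\in\omega\}$. A tree mapping with domain $n\ge1$ is a partial function $\pi$ from $\{(k,\ell):k<\ell<n\}$ to $\omega$ such that for every $0<\ell<n$ there is exactly one $k<\ell$ with $\pi(k,\ell)$ defined. A finite sequence $s$ is acceptable if ${\rm dom}(s)=n_i$ for some $i$ and $s\restriction[n_j,n_{j+1})\in C_j$ for all $j<i$. $S$ is the set of all $\rho=\langle\pi,s_0,\ldots,s_{n-1}\rangle$ where $n=n(\rho)\ge1$, $\pi$ is a tree mapping with domain $n$, the $s_j$ are acceptable with a common domain $n_i$ with $n_i\ge n$ (put $i(\rho)=i$),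 and $s_k+s_\ell\in T^*_{\pi(k,\ell)}$ whenever $\pi(k,\ell)$ is defined. For $\rho=\langle\pi,s_0,\ldots,s_{n-1}\rangle\in S$, $U(\rho)$ is the set of $x_0\in H$ for which there are $x_1,\ldots,x_{n-1}\in H$ with each $s_j$ an initial segment of $x_j$ and $\langle\pi,x_0\restriction n_j,\ldots,x_{n-1}\restriction n_j\rangle\in S$ for all $j>i(\rho)$. The sets $U(\rho)$, $\rho\in S$, form a basis of a topology $\tau$ on $H$. For $B\subseteq 2^\omega$ and $x\in2^\omega$, $B+x=\{b+x:b\in B\}$. *)

From Stdlib Require Import Arith Bool.

Definition cantor := nat -> bool.
Definition cset := cantor -> Prop.

Definition cadd (x y : cantor) : cantor := fun k => xorb (x k) (y k).

Definition translate (B : cset) (x : cantor) : cset :=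
  fun z => exists b, B b /\ z = cadd b x.

Definition agree (N : nat) (x y : cantor) : Prop := forall k, k < N -> x k = y k.

Definition cantor_closed (P : cset) : Prop :=
  forall x, ~ P x -> exists N, forall y, agree N x y -> ~ P y.
Definition no_isolated (P : cset) : Prop :=
  forall x N, P x -> exists y, P y /\ y <> x /\ agree N x y.
Definition perfect_nonempty (P : cset) : Prop :=
  (exists x, P x) /\ cantor_closed P /\ no_isolated P.

Section Construction.
Variable nb : nat -> nat.
(* An element of 2^[n_i, n_{i+1}) is coded by its extension by zero;
   C i is a predicate on such codes, so C_i is an arbitrary subset of
   2^[n_i, n_{i+1}). *)
Variable C : nat -> cset.
Variable P : nat -> cset.

Definition restr_int (i : nat) (s : cantor) : cantor :=
  fun k => if (nb i <=? k) && (k <? nb (S i)) then s k else false.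

Definition memC (i : nat) (s : cantor) : Prop := C i (restr_int i s).

Definition H : cset := fun x => forall i, memC i x.

Definition Pstar (m : nat) : cset :=
  fun z => exists x y, P m x /\ P m y /\ z = cadd x y.

(* the finite sequence s|N belongs to T*_m *)
Definition inTstar (m N : nat) (s : cantor) : Prop :=
  exists z, Pstar m z /\ agree N z s.

Definition tree_mapping (nn : nat) (pi : nat -> nat -> option nat) : Prop :=
  (forall k l, pi k l <> None -> k < l /\ l < nn) /\
  (forall l, 0 < l -> l < nn ->
     exists k, k < l /\ pi k l <> None /\
       forall k', k' < l -> pi k' l <> None -> k' = k).

Definition acceptable (i : nat) (s : cantor) : Prop :=
  forall j, j < i -> memC j s.

(* rho = <pi, s_0|n_i, ..., s_{nn-1}|n_i> in S, with i(rho) = i *)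
Definition inS (nn : nat) (pi : nat -> nat -> option nat)
  (s : nat -> cantor) (i : nat) : Prop :=
  1 <= nn /\ tree_mapping nn pi /\ nn <= nb i /\
  (forall j, j < nn -> acceptable i (s j)) /\
  (forall k l m, pi k l = Some m -> inTstar m (nb i) (cadd (s k) (s l))).

Definition U (nn : nat) (pi : nat -> nat -> option nat)
  (s : nat -> cantor) (i : nat) : cset :=
  fun x0 => H x0 /\
    exists xs : nat -> cantor, xs 0 = x0 /\
      (forall j, j < nn -> H (xs j)) /\
      (forall j, j < nn -> agree (nb i) (xs j) (s j)) /\
      (forall j, i < j -> inS nn pi xs j).

Definition subset (A B : cset) : Prop := forall x, A x -> B x.

Definition tau_open (O : cset) : Prop :=
  subset O H /\
  forall x, O x -> exists nn pi s i,
    inS nn pi s i /\ U nn pi s i x /\ subset (U nn pi s i) O.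

Definition tau_closure (A : cset) : cset :=
  fun x => H x /\ forall O, tau_open O -> O x -> exists y, O y /\ A y.

Definition tau_interior (A : cset) : cset :=
  fun x => exists O, tau_open O /\ O x /\ subset O A.

Definition tau_nowhere_dense (A : cset) : Prop :=
  forall x, ~ tau_interior (tau_closure A) x.

Definition tau_meager (A : cset) : Prop :=
  exists F : nat -> cset, (forall k, tau_nowhere_dense (F k)) /\
    subset A (fun x => exists k, F k x).

Definition symdiff (A B : cset) : cset :=
  fun x => (A x /\ ~ B x) \/ (B x /\ ~ A x).

Definition tau_baire_property (A : cset) : Prop :=
  exists O, tau_open O /\ tau_meager (symdiff A O).

End Construction.

From Stdlib Require Import Arith Lia Bool Classical FunctionalExtensionality IndefiniteDescription.

(* Since B has the Baire property and is not meager, a basic open set U(rho) lies in B up to a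
   meager set, the union of nowhere dense sets G_k. A fusion argument produces two distinct
   points b1, b2 of U(rho) outside every G_k whose sum b1 + b2 is a limit of elements of P*_m:
   the conditions are elements of S made of two trees joined by an edge labelled m, and at
   stage k both roots are pushed off G_k by grafting onto each tree a basic open set disjoint
   from G_k. As P_m is compact, b1 + b2 = p + q with p <> q in P_m, and then
   b1 + p = b2 + q lies in both B + p and B + q. *)

Lemma agree_le N M x y : N <= M -> agree M x y -> agree N x y.
Proof. intros hNM h k hk. apply h. lia. Qed.

Lemma agree_sym N x y : agree N x y -> agree N y x.
Proof. intros h k hk. symmetry. auto. Qed.

Lemma agree_trans N x y z : agree N x y -> agree N y z -> agree N x z.
Proof. intros h1 h2 k hk. rewrite h1; auto. Qed.

Lemma cadd_comm x y : cadd x y = cadd y x.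
Proof. apply functional_extensionality. intro t. apply xorb_comm. Qed.

Lemma cadd_self x y : cadd x x = cadd y y.
Proof. apply functional_extensionality. intro t. unfold cadd. now rewrite !xorb_nilpotent. Qed.

Definition set_at {A : Type} (u : nat -> A) (L : nat) (a : A) : nat -> A :=
  fun t => if t =? L then a else u t.

Section Branch.
Variable A : Type.
Variable R : nat -> (nat -> A) -> Prop.
Hypothesis R_local : forall L u v, (forall t, t < L -> u t = v t) -> R L u -> R L v.
Hypothesis R_step : forall L u, R L u -> exists a, R (S L) (set_at u L a).

Lemma branch_of_extendable (u0 : nat -> A) : R 0 u0 -> exists x, forall L, R L x.
Proof.
  intros h0.
  destruct (functional_choice (fun (Lu : nat * (nat -> A)) a =>
              R (fst Lu) (snd Lu) -> R (S (fst Lu)) (set_at (snd Lu) (fst Lu) a)))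
    as [f hf].
  { intros [L u]. destruct (classic (R L u)) as [hR | hR].
    - destruct (R_step L u hR) as [a ha]. now exists a.
    - exists (u0 0). simpl. tauto. }
  set (br := fix br L := match L with 0 => u0 | S L' => set_at (br L') L' (f (L', br L')) end).
  assert (hbr : forall L, R L (br L)).
  { induction L as [|L IH]; [exact h0 | exact (hf (L, br L) IH)]. }
  assert (hstable : forall t L, t < L -> br L t = br (S t) t).
  { intros t L. induction L as [|L IH]; intros ht; [lia|].
    destruct (Nat.eq_dec t L) as [-> | hne]; [reflexivity|].
    simpl. unfold set_at at 1. destruct (Nat.eqb_spec t L); [lia|]. apply IH. lia. }
  exists (fun t => br (S t) t). intro L.
  apply (R_local L (br L)); [|apply hbr]. intros t ht. now apply hstable.
Qed.
End Branch.

Section ClosedSum.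
Variable Q : cset.
Variable w : cantor.

Definition sum_extendable L (x : nat -> bool * bool) := forall N, exists p q,
  Q p /\ Q q /\ (forall t, t < L -> x t = (p t, q t)) /\ agree N (cadd p q) w.

Lemma sum_extendable_local L x y :
  (forall t, t < L -> x t = y t) -> sum_extendable L x -> sum_extendable L y.
Proof.
  intros hxy hx N. destruct (hx N) as [p [q [hp [hq [hpq hw]]]]].
  exists p, q. repeat split; auto. intros t ht. rewrite <- hxy; auto.
Qed.

Lemma sum_extendable_step L x : sum_extendable L x ->
  exists b, sum_extendable (S L) (set_at x L b).
Proof.
  intros hext. apply NNPP. intro hno.
  assert (hbad : forall b, exists N, forall p q, Q p -> Q q ->
            (forall t, t < S L -> set_at x L b t = (p t, q t)) -> ~ agree N (cadd p q) w).
  { intro b. apply NNPP. intro hb. apply hno. exists b. intro N.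
    apply NNPP. intro hN. apply hb. exists N. intros p q hp hq hpq hw.
    apply hN. now exists p, q. }
  destruct (functional_choice _ hbad) as [Nb hNb].
  set (N := Nb (true, true) + Nb (true, false) + Nb (false, true) + Nb (false, false)).
  destruct (hext N) as [p [q [hp [hq [hpq hw]]]]].
  apply (hNb (p L, q L) p q hp hq).
  - intros t ht. unfold set_at.
    destruct (Nat.eqb_spec t L) as [-> | hne]; [reflexivity | apply hpq; lia].
  - apply (agree_le _ N); [|exact hw]. unfold N. destruct (p L), (q L); simpl; lia.
Qed.

Lemma closed_sum_of_approx : cantor_closed Q ->
  (forall N, exists p q, Q p /\ Q q /\ agree N (cadd p q) w) ->
  exists p q, Q p /\ Q q /\ cadd p q = w.
Proof.
  intros hQ happrox.
  destruct (branch_of_extendable _ sum_extendable sum_extendable_local sum_extendable_step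
              (fun _ => (false, false)))
    as [x hx].
  { intro N. destruct (happrox N) as [p [q [hp [hq hw]]]].
    exists p, q. repeat split; auto. intros t ht. lia. }
  assert (hclosed : forall y, (forall N, exists y', Q y' /\ agree N y' y) -> Q y).
  { intros y hy. apply NNPP. intro hny. destruct (hQ y hny) as [N hN].
    destruct (hy N) as [y' [hy' hag]]. exact (hN y' (agree_sym _ _ _ hag) hy'). }
  exists (fun t => fst (x t)), (fun t => snd (x t)). split; [|split].
  - apply hclosed. intro N. destruct (hx N 0) as [p [q [hp [_ [hpq _]]]]].
    exists p. split; auto. intros t ht. now rewrite hpq.
  - apply hclosed. intro N. destruct (hx N 0) as [p [q [_ [hq [hpq _]]]]].
    exists q. split; auto. intros t ht. now rewrite hpq.
  - apply functional_extensionality. intro t.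
    destruct (hx (S t) (S t)) as [p [q [_ [_ [hpq hw]]]]].
    rewrite <- hw by lia. unfold cadd. rewrite hpq by lia. reflexivity.
Qed.
End ClosedSum.

Section Construction.
Variable nb : nat -> nat.
Variable C : nat -> cset.
Variable P : nat -> cset.
Hypothesis nb_succ : forall i, nb i < nb (S i).
Hypothesis C_dense : forall (i : nat) (s : nat -> cantor),
  exists t, forall k, k <= nb i -> memC nb C i (cadd t (s k)).
Hypothesis P_perfect : forall m, perfect_nonempty (P m).

Lemma nb_lt_mono i j : i < j -> nb i < nb j.
Proof.
  induction j as [|j IH]; intros hij; [lia|].
  specialize (nb_succ j). destruct (Nat.eq_dec i j) as [-> | hne]; [lia|].
  specialize (IH ltac:(lia)). lia.
Qed.

Lemma nb_le_mono i j : i <= j -> nb i <= nb j.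
Proof.
  intros hij. destruct (Nat.eq_dec i j) as [-> | hne]; [lia|].
  apply Nat.lt_le_incl, nb_lt_mono. lia.
Qed.

Lemma le_nb i : i <= nb i.
Proof. induction i as [|i IH]; [lia|]. specialize (nb_succ i). lia. Qed.

Lemma memC_block i x y : (forall t, nb i <= t -> t < nb (S i) -> x t = y t) ->
  memC nb C i x -> memC nb C i y.
Proof.
  intros hxy. unfold memC. replace (restr_int nb i y) with (restr_int nb i x); auto.
  apply functional_extensionality. intro t. unfold restr_int.
  destruct (Nat.leb_spec (nb i) t), (Nat.ltb_spec t (nb (S i))); simpl; auto.
Qed.

Lemma memC_agree i N x y : nb (S i) <= N -> agree N x y -> memC nb C i x -> memC nb C i y.
Proof. intros hN hxy. apply memC_block. intros t _ ht. apply hxy. lia. Qed.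

Lemma acceptable_agree i x y : agree (nb i) x y -> acceptable nb C i x -> acceptable nb C i y.
Proof. intros hxy hx j hj. apply (memC_agree j (nb i) x y); auto. apply nb_le_mono. lia. Qed.

Lemma H_acceptable i x : H nb C x -> acceptable nb C i x.
Proof. intros hx j _. apply hx. Qed.

Lemma inTstar_agree m N s s' : agree N s s' -> inTstar P m N s -> inTstar P m N s'.
Proof. intros hs [z [hz hzs]]. exists z. split; auto. eapply agree_trans; eauto. Qed.

Lemma inTstar_le m N M s : N <= M -> inTstar P m M s -> inTstar P m N s.
Proof. intros hNM [z [hz hzs]]. exists z. split; auto. eapply agree_le; eauto. Qed.

Lemma inTstar_cadd_self m N x : inTstar P m N (cadd x x).
Proof.
  destruct (P_perfect m) as [[p hp] _]. exists (cadd p p). split.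
  - now exists p, p.
  - rewrite (cadd_self x p). intros k _. reflexivity.
Qed.

Lemma tree_mapping_parent_uniq nn pi k k' l : tree_mapping nn pi ->
  pi k l <> None -> pi k' l <> None -> k = k'.
Proof.
  intros [hdom hpar] hk hk'. destruct (hdom _ _ hk) as [hkl hl].
  destruct (hpar l ltac:(lia) hl) as [k0 [_ [_ huniq]]].
  destruct (hdom _ _ hk'). rewrite (huniq k), (huniq k'); auto.
Qed.

Lemma tree_mapping_edge nn pi k l m : tree_mapping nn pi -> pi k l = Some m -> k < l /\ l < nn.
Proof. intros [hdom _] he. apply hdom. congruence. Qed.

(* Solve [d l = d k + z l] node by node in increasing order: each node has a single parent,
   of smaller index. *)
Lemma tree_mapping_potential nn pi (z : nat -> cantor) : tree_mapping nn pi ->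
  exists d : nat -> cantor, forall k l m, pi k l = Some m -> d l = cadd (d k) (z l).
Proof.
  intros ht.
  assert (hupto : forall N, exists d : nat -> cantor,
             forall k l m, l < N -> pi k l = Some m -> d l = cadd (d k) (z l)).
  { induction N as [|N [d hd]].
    - exists (fun _ => z 0). intros. lia.
    - destruct (classic (exists k m, pi k N = Some m)) as [[k [m hkN]] | hnone].
      + destruct (tree_mapping_edge _ _ _ _ _ ht hkN) as [hk _].
        exists (fun l => if l =? N then cadd (d k) (z N) else d l).
        intros k' l m' hl he. destruct (tree_mapping_edge _ _ _ _ _ ht he) as [hk'l _].
        destruct (Nat.eqb_spec l N) as [-> | hne].
        * assert (k' = k) as -> by (apply (tree_mapping_parent_uniq nn pi _ _ N); congruence).
          destruct (Nat.eqb_spec k N); [lia | reflexivity].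
        * destruct (Nat.eqb_spec k' N); [lia|]. apply (hd _ _ m'); auto. lia.
      + exists d. intros k l m hl he. destruct (Nat.eq_dec l N) as [-> | hne].
        * exfalso. eauto.
        * apply (hd _ _ m); auto. lia. }
  destruct (hupto nn) as [d hd]. exists d. intros k l m he.
  apply (hd _ _ m); auto. apply (tree_mapping_edge _ _ _ _ _ ht he).
Qed.

Fixpoint block_of (k t : nat) : nat :=
  match k with 0 => 0 | S k' => if nb k <=? t then k else block_of k' t end.

Lemma block_ofE i t k : nb i <= t -> t < nb (S i) -> i <= k -> block_of k t = i.
Proof.
  intros hlo hhi. induction k as [|k IH]; intros hik; simpl; [lia|].
  destruct (Nat.eq_dec i (S k)) as [-> | hne].
  - destruct (Nat.leb_spec (nb (S k)) t); lia.
  - destruct (Nat.leb_spec (nb (S k)) t) as [hle | hlt].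
    + assert (nb (S i) <= nb (S k)) by (apply nb_le_mono; lia). lia.
    + apply IH. lia.
Qed.

Definition realizes nn pi (s : nat -> cantor) i (xs : nat -> cantor) :=
  (forall j, j < nn -> H nb C (xs j)) /\
  (forall j, j < nn -> agree (nb i) (xs j) (s j)) /\
  (forall j, i < j -> inS nb C P nn pi xs j).

Lemma realizes_U nn pi s i xs : 0 < nn -> realizes nn pi s i xs -> U nb C P nn pi s i (xs 0).
Proof. intros hnn hxs. split; [apply hxs; lia | now exists xs]. Qed.

Lemma inS_edge_sums nn pi s i : inS nb C P nn pi s i ->
  exists z : nat -> cantor, forall k l m, pi k l = Some m ->
    Pstar P m (z l) /\ agree (nb i) (z l) (cadd (s k) (s l)).
Proof.
  intros [_ [ht [_ [_ hedge]]]].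
  assert (hl : forall l, exists z, forall k m, pi k l = Some m ->
                 Pstar P m z /\ agree (nb i) z (cadd (s k) (s l))).
  2: { destruct (functional_choice _ hl) as [z hz]. exists z. intros k l m. apply hz. }
  intro l. destruct (classic (exists k m, pi k l = Some m)) as [[k [m he]] | hnone].
  - destruct (hedge _ _ _ he) as [z [hz hzs]]. exists z. intros k' m' he'.
    assert (k' = k) as -> by (apply (tree_mapping_parent_uniq nn pi _ _ l); congruence).
    rewrite he in he'. injection he' as <-. auto.
  - exists (s l). intros k m he. exfalso. eauto.
Qed.

(* Above level [i] the points are [t + d l], with [t] provided block by block by [C_dense]
   and [d] the potential of the prescribed edge sums; so every edge sum is exactly [z l]. *)
Lemma inS_realize nn pi s i (z : nat -> cantor) : inS nb C P nn pi s i ->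
  (forall k l m, pi k l = Some m -> Pstar P m (z l) /\ agree (nb i) (z l) (cadd (s k) (s l))) ->
  exists xs, realizes nn pi s i xs /\
    forall k l m, pi k l = Some m -> cadd (xs k) (xs l) = z l.
Proof.
  intros [hnn [ht [hle [hacc _]]]] hz.
  destruct (tree_mapping_potential nn pi z ht) as [d hd].
  destruct (functional_choice _ (fun i' => C_dense i' d)) as [tt htt].
  set (xs := fun l t => if t <? nb i then s l t else xorb (tt (block_of t t) t) (d l t)).
  assert (hsums : forall k l m, pi k l = Some m -> cadd (xs k) (xs l) = z l).
  { intros k l m he. apply functional_extensionality. intro t.
    destruct (hz _ _ _ he) as [_ hzs]. unfold xs, cadd in *.
    destruct (Nat.ltb_spec t (nb i)).
    - symmetry. now apply hzs.
    - rewrite (hd _ _ _ he). unfold cadd.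
      destruct (tt (block_of t t) t), (d k t), (z l t); reflexivity. }
  assert (hH : forall j, j < nn -> H nb C (xs j)).
  { intros j hj i'. destruct (Nat.ltb_spec i' i).
    - apply (memC_agree i' (nb i) (s j)).
      + apply nb_le_mono. lia.
      + intros t htl. unfold xs. destruct (Nat.ltb_spec t (nb i)); [reflexivity | lia].
      + now apply hacc.
    - assert (nb i <= nb i') by (apply nb_le_mono; lia).
      apply (memC_block i' (cadd (tt i') (d j))); [|apply htt; lia].
      intros t hlo hhi. unfold xs. destruct (Nat.ltb_spec t (nb i)); [lia|].
      rewrite (block_ofE i' t t); auto. pose proof (le_nb i'). lia. }
  exists xs. split; [split; [|split] | exact hsums].
  - exact hH.
  - intros j hj t ht'. unfold xs. destruct (Nat.ltb_spec t (nb i)); [reflexivity | lia].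
  - intros j hij. split; [auto | split; [auto | split; [|split]]].
    + pose proof (nb_le_mono i j ltac:(lia)). lia.
    + intros l hl. apply H_acceptable, hH, hl.
    + intros k l m he. exists (z l). split; [apply (hz _ _ _ he)|].
      rewrite (hsums _ _ _ he). intros t _. reflexivity.
Qed.

Lemma inS_realizable nn pi s i : inS nb C P nn pi s i -> exists xs, realizes nn pi s i xs.
Proof.
  intros hs. destruct (inS_edge_sums _ _ _ _ hs) as [z hz].
  destruct (inS_realize _ _ _ _ z hs hz) as [xs [hxs _]]. eauto.
Qed.

Definition edge_map (pi1 pi2 : nat -> nat -> option nat) (phi : nat -> nat) :=
  forall k l m, pi2 k l = Some m ->
    phi k = phi l \/ pi1 (phi k) (phi l) = Some m \/ pi1 (phi l) (phi k) = Some m.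

Lemma inS_transport n1 pi1 s1 i n2 pi2 phi s2 : inS nb C P n1 pi1 s1 i ->
  tree_mapping n2 pi2 -> 1 <= n2 -> n2 <= nb i ->
  (forall j, j < n2 -> phi j < n1) -> edge_map pi1 pi2 phi ->
  (forall j, j < n2 -> agree (nb i) (s2 j) (s1 (phi j))) -> inS nb C P n2 pi2 s2 i.
Proof.
  intros [_ [_ [_ [hacc hedge]]]] ht2 hn2 hle hphi hmap hs.
  split; [auto | split; [auto | split; [auto | split]]].
  - intros j hj. apply (acceptable_agree i (s1 (phi j))); [apply agree_sym|]; auto.
  - intros k l m he. destruct (tree_mapping_edge _ _ _ _ _ ht2 he) as [hkl hl].
    assert (hsum : agree (nb i) (cadd (s1 (phi k)) (s1 (phi l))) (cadd (s2 k) (s2 l))).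
    { intros t htl. unfold cadd. rewrite (hs k), (hs l); auto; lia. }
    apply (inTstar_agree _ _ _ _ hsum).
    destruct (hmap _ _ _ he) as [heq | [hfwd | hbwd]].
    + rewrite heq. apply inTstar_cadd_self.
    + now apply hedge.
    + rewrite cadd_comm. now apply hedge.
Qed.

Lemma inS_lower_level nn pi s i i' : inS nb C P nn pi s i -> i' <= i -> nn <= nb i' ->
  inS nb C P nn pi s i'.
Proof.
  intros [hnn [ht [_ [hacc hedge]]]] hi hle. split; [auto | split; [auto | split; [auto | split]]].
  - intros j hj k hk. apply hacc; auto. lia.
  - intros k l m he. apply (inTstar_le _ _ (nb i)); [apply nb_le_mono; auto | eauto].
Qed.

Lemma realizes_transport n1 pi1 s1 i1 n2 pi2 s2 i2 phi xs :
  inS nb C P n1 pi1 s1 i1 -> inS nb C P n2 pi2 s2 i2 -> i2 <= i1 ->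
  (forall j, j < n2 -> phi j < n1) -> edge_map pi1 pi2 phi ->
  (forall j, j < n2 -> agree (nb i2) (s2 j) (s1 (phi j))) ->
  realizes n1 pi1 s1 i1 xs -> realizes n2 pi2 s2 i2 (fun j => xs (phi j)).
Proof.
  intros hs1 hs2 hi hphi hmap hs [hH [hag hlater]].
  destruct hs2 as [hn2 [ht2 [hle2 _]]].
  split; [|split].
  - intros j hj. apply hH. auto.
  - intros j hj. apply (agree_trans _ _ (s1 (phi j))).
    + apply (agree_le _ (nb i1)); [apply nb_le_mono | apply hag]; auto.
    + apply agree_sym. auto.
  - intros j hj. pose proof (nb_le_mono i2 j ltac:(lia)).
    destruct (Nat.ltb_spec i1 j).
    + apply (inS_transport n1 pi1 xs j n2 pi2 phi); auto; [lia|]. intros t _ k _. reflexivity.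
    + pose proof (nb_le_mono j i1 ltac:(lia)).
      apply (inS_lower_level _ _ _ i1); auto; [|lia].
      apply (inS_transport n1 pi1 s1 i1 n2 pi2 phi); auto; lia.
Qed.

Variable m : nat.

(* A condition consists of two trees, [piA] on the nodes [0 .. nA - 1] and [piB] on the nodes
   [nA .. nA + nB - 1], joined by an edge from [0] to [nA] labelled [m]; the two points of the
   final pair are the realizations of the nodes [0] and [nA]. *)
Record cond := mkcond {
  nA : nat; piA : nat -> nat -> option nat; sA : nat -> cantor;
  nB : nat; piB : nat -> nat -> option nat; sB : nat -> cantor;
  level : nat }.

Definition csize c := nA c + nB c.

Definition cpi c k l :=
  if l <? nA c then piA c k l
  else if (k =? 0) && (l =? nA c) then Some m
  else if nA c <=? k then piB c (k - nA c) (l - nA c) else None.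

Definition cdata c j := if j <? nA c then sA c j else sB c (j - nA c).

Definition valid c :=
  inS nb C P (csize c) (cpi c) (cdata c) (level c) /\
  tree_mapping (nA c) (piA c) /\ tree_mapping (nB c) (piB c) /\ 1 <= nA c /\ 1 <= nB c.

Definition crealizes c w := realizes (csize c) (cpi c) (cdata c) (level c) w.

Lemma cpi_A c k l : l < nA c -> cpi c k l = piA c k l.
Proof. intros hl. unfold cpi. destruct (Nat.ltb_spec l (nA c)); [auto | lia]. Qed.

Lemma cpi_link c : cpi c 0 (nA c) = Some m.
Proof.
  unfold cpi. destruct (Nat.ltb_spec (nA c) (nA c)); [lia|]. now rewrite !Nat.eqb_refl.
Qed.

Lemma cpi_B c k l : 1 <= nA c -> cpi c (nA c + k) (nA c + l) = piB c k l.
Proof.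
  intros ha. unfold cpi. destruct (Nat.ltb_spec (nA c + l) (nA c)); [lia|].
  destruct (Nat.eqb_spec (nA c + k) 0); [lia|]. simpl.
  destruct (Nat.leb_spec (nA c) (nA c + k)); [|lia]. f_equal; lia.
Qed.

Lemma cpi_cases c k l m' : cpi c k l = Some m' ->
  (l < nA c /\ piA c k l = Some m') \/ (k = 0 /\ l = nA c /\ m' = m) \/
  (exists k0 l0, k = nA c + k0 /\ l = nA c + l0 /\ piB c k0 l0 = Some m').
Proof.
  unfold cpi. destruct (Nat.ltb_spec l (nA c)); [auto|].
  destruct (Nat.eqb_spec k 0), (Nat.eqb_spec l (nA c)); simpl;
    [intro he; injection he as <-; auto | ..].
  all: destruct (Nat.leb_spec (nA c) k); [|discriminate].
  all: intro he; right; right; exists (k - nA c), (l - nA c).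
  all: split; [lia | split; [lia | exact he]].
Qed.

Lemma cdata_A c j : j < nA c -> cdata c j = sA c j.
Proof. intros hj. unfold cdata. destruct (Nat.ltb_spec j (nA c)); [auto | lia]. Qed.

Lemma cdata_B c j : cdata c (nA c + j) = sB c j.
Proof. unfold cdata. destruct (Nat.ltb_spec (nA c + j) (nA c)); [lia|]. f_equal; lia. Qed.

Lemma cond_tree c : tree_mapping (nA c) (piA c) -> tree_mapping (nB c) (piB c) ->
  1 <= nA c -> 1 <= nB c -> tree_mapping (csize c) (cpi c).
Proof.
  intros tA tB ha hb. pose proof tA as [a1 a2]. pose proof tB as [b1 b2]. unfold csize. split.
  - intros k l he. destruct (cpi c k l) as [m'|] eqn:E; [|congruence].
    destruct (cpi_cases c k l m' E) as [[hl hA] | [[-> [-> _]] | [k0 [l0 [-> [-> hB]]]]]].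
    + destruct (a1 k l); [congruence | lia].
    + lia.
    + destruct (b1 k0 l0); [congruence | lia].
  - intros l hl hl2. destruct (Nat.ltb_spec l (nA c)).
    + destruct (a2 l hl) as [k [hk [hk2 hu]]]; auto. exists k. rewrite cpi_A by auto.
      split; [auto | split; [auto|]]. intros k' hk' e. rewrite cpi_A in e by auto. auto.
    + destruct (Nat.eq_dec l (nA c)) as [-> | hne].
      * exists 0. split; [lia|]. rewrite cpi_link. split; [congruence|].
        intros k' hk' e. destruct (cpi c k' (nA c)) as [m'|] eqn:E; [|congruence].
        destruct (cpi_cases c k' (nA c) m' E) as [[? _] | [[? _] | [k0 [l0 [? [? _]]]]]]; lia.
      * destruct (b2 (l - nA c)) as [k0 [hk0 [hk02 hu]]]; try lia.
        exists (nA c + k0). split; [lia|]. split.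
        { replace l with (nA c + (l - nA c)) by lia. rewrite cpi_B by auto. auto. }
        intros k' hk' e. destruct (cpi c k' l) as [m'|] eqn:E; [|congruence].
        destruct (cpi_cases c k' l m' E) as [[? _] | [[? [? _]] | [k1 [l1 [-> [-> hB]]]]]];
          [lia | lia|].
        rewrite (hu k1); [reflexivity | lia|].
        replace (nA c + l1 - nA c) with l1 by lia. congruence.
Qed.

Lemma valid_intro c : tree_mapping (nA c) (piA c) -> tree_mapping (nB c) (piB c) ->
  1 <= nA c -> 1 <= nB c -> csize c <= nb (level c) ->
  (forall j, j < csize c -> acceptable nb C (level c) (cdata c j)) ->
  (forall k l m', piA c k l = Some m' -> inTstar P m' (nb (level c)) (cadd (sA c k) (sA c l))) ->
  (forall k l m', piB c k l = Some m' -> inTstar P m' (nb (level c)) (cadd (sB c k) (sB c l))) ->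
  inTstar P m (nb (level c)) (cadd (sA c 0) (sB c 0)) -> valid c.
Proof.
  intros tA tB ha hb hle hacc eA eB elink. split; [|auto].
  split; [unfold csize; lia | split; [apply cond_tree; auto | split; [auto | split; [auto|]]]].
  intros k l m' E.
  destruct (cpi_cases c k l m' E) as [[hl hA] | [[-> [-> ->]] | [k0 [l0 [-> [-> hB]]]]]].
  - destruct (tree_mapping_edge _ _ _ _ _ tA hA). rewrite !cdata_A by lia. auto.
  - rewrite cdata_A by lia. rewrite <- (cdata_B c 0), Nat.add_0_r in elink. exact elink.
  - rewrite !cdata_B. auto.
Qed.

Lemma realizes_edge_A c w k l m' j : valid c -> crealizes c w -> piA c k l = Some m' ->
  level c < j -> inTstar P m' (nb j) (cadd (w k) (w l)).
Proof.
  intros [_ [tA _]] [_ [_ hlater]] he hj. destruct (hlater j hj) as [_ [_ [_ [_ hedge]]]].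
  apply (hedge k l). destruct (tree_mapping_edge _ _ _ _ _ tA he). rewrite cpi_A; auto.
Qed.

Lemma realizes_edge_B c w k l m' j : valid c -> crealizes c w -> piB c k l = Some m' ->
  level c < j -> inTstar P m' (nb j) (cadd (w (nA c + k)) (w (nA c + l))).
Proof.
  intros [_ [_ [_ [ha _]]]] [_ [_ hlater]] he hj. destruct (hlater j hj) as [_ [_ [_ [_ hedge]]]].
  apply (hedge (nA c + k) (nA c + l)). rewrite cpi_B; auto.
Qed.

Lemma realizes_edge_link c w j : crealizes c w -> level c < j ->
  inTstar P m (nb j) (cadd (w 0) (w (nA c))).
Proof.
  intros [_ [_ hlater]] hj. destruct (hlater j hj) as [_ [_ [_ [_ hedge]]]].
  apply (hedge 0 (nA c)). apply cpi_link.
Qed.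

Definition extends c c' :=
  level c <= level c' /\ nA c <= nA c' /\ nB c <= nB c' /\
  (forall k l, l < nA c -> piA c' k l = piA c k l) /\
  (forall k l, l < nB c -> piB c' k l = piB c k l) /\
  (forall j, j < nA c -> agree (nb (level c)) (sA c' j) (sA c j)) /\
  (forall j, j < nB c -> agree (nb (level c)) (sB c' j) (sB c j)).

Lemma extends_refl c : extends c c.
Proof. repeat split; auto; intros; intros t _; reflexivity. Qed.

Lemma extends_trans c1 c2 c3 : extends c1 c2 -> extends c2 c3 -> extends c1 c3.
Proof.
  intros [a1 [a2 [a3 [a4 [a5 [a6 a7]]]]]] [b1 [b2 [b3 [b4 [b5 [b6 b7]]]]]].
  assert (hnb : nb (level c1) <= nb (level c2)) by (apply nb_le_mono; auto).
  split; [lia | split; [lia | split; [lia | split; [| split; [| split]]]]].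
  - intros k l h. rewrite b4 by lia. auto.
  - intros k l h. rewrite b5 by lia. auto.
  - intros j h. apply (agree_trans _ _ (sA c2 j)); [apply (agree_le _ _ _ _ hnb), b6; lia | auto].
  - intros j h. apply (agree_trans _ _ (sB c2 j)); [apply (agree_le _ _ _ _ hnb), b7; lia | auto].
Qed.

(* Index [j] of [c] as a node of an extension [c']: the B-nodes are shifted. *)
Definition ext_index c c' j := if j <? nA c then j else j - nA c + nA c'.

Lemma ext_index_lt c c' j : extends c c' -> j < csize c -> ext_index c c' j < csize c'.
Proof.
  intros [_ [hA [hB _]]] hj. unfold ext_index, csize in *.
  destruct (Nat.ltb_spec j (nA c)); lia.
Qed.

Lemma extends_edge_map c c' : valid c -> valid c' -> extends c c' ->
  edge_map (cpi c') (cpi c) (ext_index c c').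
Proof.
  intros [_ [tA [tB [ha hb]]]] [_ [_ [_ [ha' _]]]] [_ [hA [_ [eA [eB _]]]]] k l m' E.
  right; left. unfold ext_index.
  destruct (cpi_cases c k l m' E) as [[hl hpA] | [[-> [-> ->]] | [k0 [l0 [-> [-> hpB]]]]]].
  - destruct (tree_mapping_edge _ _ _ _ _ tA hpA).
    destruct (Nat.ltb_spec k (nA c)); [|lia]. destruct (Nat.ltb_spec l (nA c)); [|lia].
    rewrite cpi_A by lia. rewrite eA; auto.
  - destruct (Nat.ltb_spec 0 (nA c)); [|lia]. destruct (Nat.ltb_spec (nA c) (nA c)); [lia|].
    rewrite Nat.sub_diag. apply cpi_link.
  - destruct (tree_mapping_edge _ _ _ _ _ tB hpB).
    destruct (Nat.ltb_spec (nA c + k0) (nA c)); [lia|].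
    destruct (Nat.ltb_spec (nA c + l0) (nA c)); [lia|].
    replace (nA c + k0 - nA c + nA c') with (nA c' + k0) by lia.
    replace (nA c + l0 - nA c + nA c') with (nA c' + l0) by lia.
    rewrite cpi_B by auto. rewrite eB; auto.
Qed.

Lemma extends_data c c' j : extends c c' -> j < csize c ->
  agree (nb (level c)) (cdata c' (ext_index c c' j)) (cdata c j).
Proof.
  intros [_ [hA [_ [_ [_ [eA eB]]]]]] hj. unfold ext_index, csize in *.
  destruct (Nat.ltb_spec j (nA c)).
  - rewrite !cdata_A by lia. auto.
  - replace (j - nA c + nA c') with (nA c' + (j - nA c)) by lia. rewrite cdata_B.
    replace j with (nA c + (j - nA c)) at 2 by lia. rewrite cdata_B. apply eB. lia.
Qed.

Lemma extends_realizes c c' w : valid c -> valid c' -> extends c c' -> crealizes c' w ->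
  crealizes c (fun j => w (ext_index c c' j)).
Proof.
  intros hv hv' he hw.
  apply (realizes_transport _ _ _ _ _ _ _ _ _ _ (proj1 hv') (proj1 hv)); auto.
  - apply he.
  - intros j hj. apply ext_index_lt; auto.
  - apply extends_edge_map; auto.
  - intros j hj. apply agree_sym, extends_data; auto.
Qed.

Lemma extends_inS c c' : valid c -> valid c' -> extends c c' ->
  inS nb C P (csize c) (cpi c) (fun j => cdata c' (ext_index c c' j)) (level c').
Proof.
  intros hv hv' he. pose proof hv as [hs [tA [tB [ha hb]]]]. pose proof hs as [_ [_ [hle _]]].
  pose proof (nb_le_mono (level c) (level c') (proj1 he)).
  apply (inS_transport _ _ _ _ _ _ (ext_index c c') _ (proj1 hv')); auto.
  - apply cond_tree; auto.
  - unfold csize. lia.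
  - lia.
  - intros j hj. apply ext_index_lt; auto.
  - apply extends_edge_map; auto.
  - intros j hj t ht. reflexivity.
Qed.

Definition swap c := mkcond (nB c) (piB c) (sB c) (nA c) (piA c) (sA c) (level c).

Definition swap_index c j := if j <? nB c then nA c + j else j - nB c.

Lemma swap_involutive c : swap (swap c) = c.
Proof. destruct c; reflexivity. Qed.

Lemma swap_edge_map c : valid c -> edge_map (cpi c) (cpi (swap c)) (swap_index c).
Proof.
  intros [_ [tA [tB [ha hb]]]] k l m' E. unfold swap_index.
  destruct (cpi_cases (swap c) k l m' E) as [[hl hpB] | [[-> [-> ->]] | [k0 [l0 [-> [-> hpA]]]]]];
    simpl in *.
  - right; left. destruct (tree_mapping_edge _ _ _ _ _ tB hpB).
    destruct (Nat.ltb_spec k (nB c)); [|lia]. destruct (Nat.ltb_spec l (nB c)); [|lia].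
    rewrite cpi_B; auto.
  - right; right. destruct (Nat.ltb_spec 0 (nB c)); [|lia].
    destruct (Nat.ltb_spec (nB c) (nB c)); [lia|]. rewrite Nat.sub_diag, Nat.add_0_r.
    apply cpi_link.
  - right; left. destruct (tree_mapping_edge _ _ _ _ _ tA hpA).
    destruct (Nat.ltb_spec (nB c + k0) (nB c)); [lia|].
    destruct (Nat.ltb_spec (nB c + l0) (nB c)); [lia|].
    replace (nB c + k0 - nB c) with k0 by lia. replace (nB c + l0 - nB c) with l0 by lia.
    rewrite cpi_A; auto.
Qed.

Lemma swap_data c j : j < csize c -> cdata (swap c) j = cdata c (swap_index c j).
Proof.
  intros hj. unfold cdata, swap_index, csize in *; simpl. destruct (Nat.ltb_spec j (nB c)).
  - destruct (Nat.ltb_spec (nA c + j) (nA c)); [lia|]. f_equal; lia.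
  - destruct (Nat.ltb_spec (j - nB c) (nA c)); [reflexivity | lia].
Qed.

Lemma swap_index_lt c j : j < csize (swap c) -> swap_index c j < csize c.
Proof. unfold swap_index, csize; simpl. destruct (Nat.ltb_spec j (nB c)); lia. Qed.

Lemma valid_swap c : valid c -> valid (swap c).
Proof.
  intros hv. pose proof hv as [hs [tA [tB [ha hb]]]]. pose proof hs as [_ [_ [hle _]]].
  split; [|simpl; auto].
  apply (inS_transport _ _ _ _ _ _ (swap_index c) _ hs); simpl; auto.
  - apply (cond_tree (swap c)); auto.
  - unfold csize; simpl; lia.
  - unfold csize in *; simpl; lia.
  - apply swap_index_lt.
  - apply swap_edge_map; auto.
  - intros j hj t ht. rewrite swap_data; auto. unfold csize in *; simpl in *; lia.
Qed.

Lemma realizes_swap c w : valid c -> crealizes c w ->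
  crealizes (swap c) (fun j => w (swap_index c j)).
Proof.
  intros hv hw.
  apply (realizes_transport _ _ _ _ _ _ _ _ _ _ (proj1 hv) (proj1 (valid_swap c hv))); auto.
  - apply swap_index_lt.
  - apply swap_edge_map; auto.
  - intros j hj t ht. rewrite swap_data; auto. unfold csize in *; simpl in *; lia.
Qed.

Lemma extends_swap c d : extends (swap c) d -> extends c (swap d).
Proof. destruct c, d. unfold extends; simpl. tauto. Qed.

Lemma crealizes_H c w j : crealizes c w -> j < csize c -> H nb C (w j).
Proof. intros [hH _] hj. auto. Qed.

Lemma crealizes_agree c w j : crealizes c w -> j < csize c ->
  agree (nb (level c)) (w j) (cdata c j).
Proof. intros [_ [hag _]] hj. auto. Qed.

(* Node [j >= 1] of the grafted tree [p'] becomes node [j + a - 1]; its root becomes node [0]. *)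
Definition graft (a : nat) (p p' : nat -> nat -> option nat) k l :=
  if l <? a then p k l else if k =? 0 then p' 0 (l + 1 - a)
  else if a <=? k then p' (k + 1 - a) (l + 1 - a) else None.

Definition graft_index a j := if j =? 0 then 0 else j + a - 1.

Lemma graft_tree a p n' p' : tree_mapping a p -> tree_mapping n' p' -> 1 <= a -> 1 <= n' ->
  tree_mapping (a + n' - 1) (graft a p p').
Proof.
  intros tA tS ha hn. pose proof tA as [a1 a2]. pose proof tS as [s1 s2]. unfold graft. split.
  - intros k l. destruct (Nat.ltb_spec l a).
    + intros E. destruct (a1 k l E); lia.
    + destruct (Nat.eqb_spec k 0).
      * intros E. destruct (s1 _ _ E); lia.
      * destruct (Nat.leb_spec a k); [|congruence]. intros E. destruct (s1 _ _ E); lia.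
  - intros l hl hl2. destruct (Nat.ltb_spec l a).
    + destruct (a2 l hl) as [k [hk [hk2 hu]]]; auto; exists k; auto.
    + destruct (s2 (l + 1 - a)) as [k0 [hk0 [hk02 hu]]]; try lia.
      exists (graft_index a k0). unfold graft_index.
      destruct (Nat.eqb_spec k0 0) as [-> | hk0'].
      * split; [lia|]. destruct (Nat.ltb_spec l a); [lia|]. simpl. split; auto.
        intros k' hk' E. destruct (Nat.eqb_spec k' 0); auto.
        destruct (Nat.leb_spec a k'); [|congruence].
        assert (k' + 1 - a = 0) by (apply hu; [lia|auto]). lia.
      * split; [lia|]. destruct (Nat.ltb_spec l a); [lia|].
        destruct (Nat.eqb_spec (k0 + a - 1) 0); [lia|].
        destruct (Nat.leb_spec a (k0 + a - 1)); [|lia].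
        split. { replace (k0 + a - 1 + 1 - a) with k0 by lia. auto. }
        intros k' hk' E. destruct (Nat.eqb_spec k' 0) as [-> | hk'0].
        -- assert (0 = k0) by (apply hu; [lia|auto]). lia.
        -- destruct (Nat.leb_spec a k'); [|congruence].
           assert (k' + 1 - a = k0) by (apply hu; [lia|auto]). lia.
Qed.

Lemma graft_edge a p n' p' k l m' : tree_mapping n' p' -> 1 <= a -> p' k l = Some m' ->
  graft_index a l < a + n' - 1 /\ graft a p p' (graft_index a k) (graft_index a l) = Some m'.
Proof.
  intros ht ha he. destruct (tree_mapping_edge _ _ _ _ _ ht he) as [hkl hl].
  unfold graft, graft_index. destruct (Nat.eqb_spec l 0); [lia|]. split; [lia|].
  destruct (Nat.ltb_spec (l + a - 1) a); [lia|].
  replace (l + a - 1 + 1 - a) with l by lia.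
  destruct (Nat.eqb_spec k 0) as [-> | hk]; [exact he|].
  destruct (Nat.eqb_spec (k + a - 1) 0); [lia|]. destruct (Nat.leb_spec a (k + a - 1)); [|lia].
  replace (k + a - 1 + 1 - a) with k by lia. exact he.
Qed.

(* [c] frozen at its realization [w], with a realization [ys] of another element of S grafted
   onto its A-tree at node 0. *)
Definition graft_cond c n' p' (w ys : nat -> cantor) L :=
  mkcond (nA c + n' - 1) (graft (nA c) (piA c) p')
    (fun j => if j <? nA c then w j else ys (j + 1 - nA c))
    (nB c) (piB c) (fun j => w (nA c + j)) L.

Section Graft.
Variables (c : cond) (w : nat -> cantor).
Variables (n' : nat) (p' : nat -> nat -> option nat) (s' ys : nat -> cantor) (i' L : nat).
Hypothesis hv : valid c.
Hypothesis hw : crealizes c w.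
Hypothesis hs' : inS nb C P n' p' s' i'.
Hypothesis hys : realizes n' p' s' i' ys.
Hypothesis hroot : ys 0 = w 0.
Hypothesis hL : level c < L.
Hypothesis hL' : i' < L.
Hypothesis hLsize : nA c + nB c + n' <= L.

Lemma graft_cond_valid : valid (graft_cond c n' p' w ys L).
Proof.
  pose proof hv as [_ [tA [tB [ha hb]]]]. pose proof hs' as [hn' [tS _]].
  destruct hys as [ysH [_ ysS]]. destruct (ysS L hL') as [_ [_ [_ [_ ysedge]]]].
  apply valid_intro; simpl.
  - apply graft_tree; auto.
  - exact tB.
  - lia.
  - exact hb.
  - unfold csize; simpl. pose proof (le_nb L). lia.
  - intros j hj. apply H_acceptable. unfold cdata, csize in *; simpl in *.
    destruct (Nat.ltb_spec j (nA c + n' - 1)), (Nat.ltb_spec j (nA c)).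
    all: try (apply (crealizes_H c w); [exact hw | unfold csize; lia]).
    all: try (apply ysH; lia). all: lia.
  - intros k l m' E. unfold graft in *. destruct (Nat.ltb_spec l (nA c)).
    + destruct (tree_mapping_edge _ _ _ _ _ tA E) as [hkl _].
      destruct (Nat.ltb_spec k (nA c)); [|lia]. eapply realizes_edge_A; eauto.
    + destruct (Nat.eqb_spec k 0) as [-> | hk].
      * destruct (Nat.ltb_spec 0 (nA c)); [|lia]. rewrite <- hroot.
        exact (ysedge 0 (l + 1 - nA c) m' E).
      * destruct (Nat.leb_spec (nA c) k); [|congruence]. destruct (Nat.ltb_spec k (nA c)); [lia|].
        exact (ysedge _ _ m' E).
  - intros k l m' E. eapply realizes_edge_B; eauto.
  - destruct (Nat.ltb_spec 0 (nA c)); [|lia]. rewrite Nat.add_0_r. eapply realizes_edge_link; eauto.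
Qed.

Lemma graft_cond_extends : extends c (graft_cond c n' p' w ys L).
Proof.
  pose proof hs' as [hn' _]. unfold extends; simpl.
  split; [lia | split; [lia | split; [lia | split; [| split; [| split]]]]].
  - intros k l hl. unfold graft. destruct (Nat.ltb_spec l (nA c)); [auto | lia].
  - auto.
  - intros j hj. destruct (Nat.ltb_spec j (nA c)); [|lia]. rewrite <- (cdata_A c j) by auto.
    apply crealizes_agree; auto. unfold csize; lia.
  - intros j hj. rewrite <- (cdata_B c j). apply crealizes_agree; auto. unfold csize; lia.
Qed.

Lemma graft_cond_realizes w' : crealizes (graft_cond c n' p' w ys L) w' ->
  realizes n' p' s' i' (fun j => w' (graft_index (nA c) j)).
Proof.
  intros hw'. pose proof hv as [_ [_ [_ [ha _]]]]. pose proof hs' as [hn' [tS [hn'le _]]].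
  pose proof graft_cond_valid as [hs'' _].
  apply (realizes_transport _ _ _ _ _ _ _ _ _ _ hs'' hs'); auto.
  - simpl. lia.
  - intros j hj. unfold graft_index, csize; simpl. destruct (Nat.eqb_spec j 0); lia.
  - intros k l m0 he. destruct (graft_edge (nA c) (piA c) _ _ _ _ _ tS ha he) as [hl hgr].
    right; left. rewrite cpi_A by (simpl; lia). exact hgr.
  - intros j hj. unfold graft_index. rewrite cdata_A.
    2: { simpl. destruct (Nat.eqb_spec j 0); lia. }
    simpl. destruct (Nat.eqb_spec j 0) as [-> | hj0].
    + destruct (Nat.ltb_spec 0 (nA c)); [|lia]. rewrite <- hroot. apply agree_sym, hys. lia.
    + destruct (Nat.ltb_spec (j + nA c - 1) (nA c)); [lia|].
      replace (j + nA c - 1 + 1 - nA c) with j by lia. apply agree_sym, hys. auto.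
Qed.
End Graft.

Lemma U_open nn pi s i : inS nb C P nn pi s i -> tau_open nb C P (U nb C P nn pi s i).
Proof.
  intros hs. split; [intros x [hx _]; exact hx|].
  intros x hx. exists nn, pi, s, i. split; [exact hs | split; [exact hx | intros y hy; exact hy]].
Qed.

Lemma nowhere_dense_basic_avoid nn pi s i x F : inS nb C P nn pi s i -> U nb C P nn pi s i x ->
  tau_nowhere_dense nb C P F ->
  exists y n' p' s' i', U nb C P nn pi s i y /\ inS nb C P n' p' s' i' /\
    U nb C P n' p' s' i' y /\ forall z, U nb C P n' p' s' i' z -> ~ F z.
Proof.
  intros hs hx hF.
  assert (hy : exists y, U nb C P nn pi s i y /\ ~ tau_closure nb C P F y).
  { apply NNPP. intro hno. apply (hF x). exists (U nb C P nn pi s i).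
    split; [apply U_open, hs | split; [exact hx|]].
    intros y hy. apply NNPP. intro hcl. apply hno. eauto. }
  destruct hy as [y [hUy hcl]].
  assert (hO : exists O, tau_open nb C P O /\ O y /\ forall z, O z -> ~ F z).
  { apply NNPP. intro hno. apply hcl. split; [apply hUy|]. intros O hO hOy.
    apply NNPP. intro hmeet. apply hno. exists O. split; [exact hO | split; [exact hOy|]].
    intros z hz hFz. apply hmeet. eauto. }
  destruct hO as [O [[_ hbasic] [hOy hOF]]].
  destruct (hbasic y hOy) as [n' [p' [s' [i' [hs' [hU' hsub]]]]]].
  exists y, n', p', s', i'. split; [exact hUy | split; [exact hs' | split; [exact hU'|]]].
  intros z hz. apply hOF, hsub, hz.
Qed.

Lemma shrink_avoiding c F : valid c -> tau_nowhere_dense nb C P F ->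
  exists c', valid c' /\ extends c c' /\ level c < level c' /\
    forall w, crealizes c' w -> ~ F (w 0).
Proof.
  intros hv hF. pose proof hv as [hs [_ [_ [ha hb]]]].
  destruct (inS_realizable _ _ _ _ hs) as [w0 hw0].
  assert (hU0 : U nb C P (csize c) (cpi c) (cdata c) (level c) (w0 0))
    by (apply realizes_U; [unfold csize; lia | exact hw0]).
  destruct (nowhere_dense_basic_avoid _ _ _ _ _ F hs hU0 hF)
    as [y [n' [p' [s' [i' [[_ [w [hwy hw]]] [hs' [[_ [ys [hysy hys]]] hav]]]]]]]].
  set (L := S (level c + i' + csize c + n')).
  assert (hroot : ys 0 = w 0) by congruence.
  exists (graft_cond c n' p' w ys L).
  split; [apply (graft_cond_valid _ _ _ _ s' _ i'); auto; unfold L, csize in *; lia|].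
  split; [apply (graft_cond_extends c w n' p' s' ys i' L); auto; unfold L, csize; lia|].
  split; [simpl; unfold L; lia|].
  intros w' hw'. apply hav.
  apply (realizes_U _ _ _ _ (fun j => w' (graft_index (nA c) j))); [destruct hs' as [? _]; lia|].
  apply (graft_cond_realizes c w n' p' s' ys i' L); auto; unfold L, csize in *; lia.
Qed.
Lemma Pstar_nonzero_near m' z N : Pstar P m' z ->
  exists z', Pstar P m' z' /\ agree N z' z /\ exists t, z' t = true.
Proof.
  intros [p [q [hp [hq ->]]]].
  destruct (P_perfect m') as [_ [_ hnoiso]].
  destruct (hnoiso q N hq) as [q' [hq' [hne hqq]]].
  destruct (classic (exists t, cadd p q t = true)) as [hnz | hz].
  - exists (cadd p q). split; [now exists p, q | split; [intros t _; reflexivity | exact hnz]].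
  - exists (cadd p q'). split; [now exists p, q' | split].
    + intros t ht. unfold cadd. now rewrite hqq.
    + apply NNPP. intro hz'. apply hne. apply functional_extensionality. intro t.
      assert (e : cadd p q t = false /\ cadd p q' t = false).
      { split; apply not_true_is_false; intro e; eauto. }
      unfold cadd in e. destruct (p t), (q t), (q' t); simpl in e; intuition congruence.
Qed.

Definition cond_at c (xs : nat -> cantor) L :=
  mkcond (nA c) (piA c) xs (nB c) (piB c) (fun j => xs (nA c + j)) L.

Lemma cdata_cond_at c xs L : cdata (cond_at c xs L) = xs.
Proof.
  apply functional_extensionality. intro j. unfold cdata, cond_at; simpl.
  destruct (Nat.ltb_spec j (nA c)); [reflexivity | f_equal; lia].
Qed.

Lemma cond_at_extends c xs L : valid c -> crealizes c xs -> level c < L ->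
  valid (cond_at c xs L) /\ extends c (cond_at c xs L).
Proof.
  intros [hs htrees] [_ [hag hlater]] hL. split.
  - split; [|exact htrees]. change (inS nb C P (csize c) (cpi c) (cdata (cond_at c xs L)) L).
    rewrite cdata_cond_at. now apply hlater.
  - unfold extends, cond_at; simpl.
    split; [lia | split; [lia | split; [lia | split; [auto | split; [auto | split]]]]].
    + intros j hj. rewrite <- (cdata_A c j) by auto. apply hag. unfold csize. lia.
    + intros j hj. rewrite <- (cdata_B c j). apply hag. unfold csize. lia.
Qed.

(* Choose a nonzero sum on the linking edge, realize it exactly, and freeze it beyond the
   coordinate where it is nonzero. *)
Lemma separate c : valid c ->
  exists c', valid c' /\ extends c c' /\ forall w, crealizes c' w -> w 0 <> w (nA c').
Proof.
  intros hv. pose proof hv as [hs [tA [tB [hA hB]]]].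
  set (a := nA c).
  destruct (inS_edge_sums _ _ _ _ hs) as [z hz].
  destruct (hz 0 a m (cpi_link c)) as [hza hzag].
  destruct (Pstar_nonzero_near _ _ (nb (level c)) hza) as [Z [hZ [hZag [t0 ht0]]]].
  set (z' := fun l => if l =? a then Z else z l).
  assert (hz' : forall k l m', cpi c k l = Some m' ->
             Pstar P m' (z' l) /\ agree (nb (level c)) (z' l) (cadd (cdata c k) (cdata c l))).
  { intros k l m' he. unfold z'. destruct (Nat.eqb_spec l a) as [-> | hne]; [|auto].
    assert (k = 0) as ->.
    { apply (tree_mapping_parent_uniq _ _ _ _ a (cond_tree c tA tB hA hB)); [congruence|].
      rewrite cpi_link. discriminate. }
    rewrite cpi_link in he. injection he as <-. split; [auto | eapply agree_trans; eauto]. }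
  destruct (inS_realize _ _ _ _ z' hs hz') as [xs [hxs hsums]].
  set (L := S (level c + t0)).
  destruct (cond_at_extends c xs L hv hxs ltac:(unfold L; lia)) as [hv' hext].
  exists (cond_at c xs L). split; [exact hv' | split; [exact hext|]].
  intros w hw heq.
  assert (hsum := f_equal (fun x => x t0) (hsums 0 a m (cpi_link c))). simpl in hsum.
  unfold z' in hsum. rewrite Nat.eqb_refl in hsum.
  assert (hlt : t0 < nb L) by (pose proof (le_nb L); unfold L in *; lia).
  pose proof (crealizes_agree _ _ 0 hw ltac:(unfold csize, cond_at; simpl; lia) t0 hlt) as h0.
  pose proof (crealizes_agree _ _ a hw ltac:(unfold csize, cond_at, a; simpl; lia) t0 hlt) as ha.
  rewrite cdata_cond_at in h0, ha. simpl in heq. fold a in heq.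
  unfold cadd in hsum. rewrite <- h0, <- ha, heq, xorb_nilpotent in hsum. congruence.
Qed.

Lemma cpi_A_edge_map c : tree_mapping (nA c) (piA c) -> edge_map (cpi c) (piA c) (fun j => j).
Proof.
  intros tA k l m' he. right; left. destruct (tree_mapping_edge _ _ _ _ _ tA he).
  rewrite cpi_A; auto.
Qed.

Lemma valid_inS_A c : valid c -> inS nb C P (nA c) (piA c) (sA c) (level c).
Proof.
  intros hv. pose proof hv as [hs [tA [_ [ha _]]]]. pose proof hs as [_ [_ [hle _]]].
  apply (inS_transport _ _ _ _ _ _ (fun j => j) _ hs tA ha); [unfold csize in *; lia | ..].
  - intros j hj. unfold csize. lia.
  - apply cpi_A_edge_map, tA.
  - intros j hj. rewrite cdata_A by auto. intros t _. reflexivity.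
Qed.

Lemma crealizes_A c w : valid c -> crealizes c w -> realizes (nA c) (piA c) (sA c) (level c) w.
Proof.
  intros hv hw. pose proof hv as [hs [tA _]].
  apply (realizes_transport _ _ _ _ _ _ _ _ (fun j => j) _ hs (valid_inS_A c hv)); auto.
  - intros j hj. unfold csize. lia.
  - apply cpi_A_edge_map, tA.
  - intros j hj. rewrite cdata_A by auto. intros t _. reflexivity.
Qed.

(* Both trees are copies of the given element of S, so [swap c = c]. *)
Lemma cond_of_basic nn pi s i x : inS nb C P nn pi s i -> U nb C P nn pi s i x ->
  exists c, valid c /\ forall w, crealizes c w ->
    U nb C P nn pi s i (w 0) /\ U nb C P nn pi s i (w (nA c)).
Proof.
  intros hs [_ [xs [_ hxs]]]. pose proof hs as [hnn [ht [hle _]]].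
  destruct hxs as [xH [xag xS]].
  set (L := S (i + nn + nn)).
  set (c := mkcond nn pi xs nn pi xs L).
  assert (hL : i < L) by (unfold L; lia).
  assert (hv : valid c).
  { destruct (xS L hL) as [_ [_ [_ [_ hedge]]]].
    apply valid_intro; simpl; auto.
    - unfold csize; simpl. pose proof (le_nb L). unfold L in *. lia.
    - intros j hj. apply H_acceptable. unfold cdata, csize in *; simpl in *.
      destruct (Nat.ltb_spec j nn); apply xH; lia.
    - apply inTstar_cadd_self. }
  assert (hA : forall w, crealizes c w -> U nb C P nn pi s i (w 0)).
  { intros w hw. apply realizes_U; [lia|].
    apply (realizes_transport nn pi xs L nn pi s i (fun j => j) w (valid_inS_A c hv) hs).
    - lia.
    - auto.
    - intros k l m' he. auto.
    - intros j hj. apply agree_sym. auto.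
    - exact (crealizes_A c w hv hw). }
  exists c. split; [exact hv|]. intros w hw. split; [exact (hA w hw)|].
  pose proof (hA _ (realizes_swap c w hv hw)) as hB.
  unfold swap_index in hB. simpl in hB. destruct (Nat.ltb_spec 0 nn); [|lia].
  rewrite Nat.add_0_r in hB. exact hB.
Qed.

Lemma ext_index_0 c c' : 1 <= nA c -> ext_index c c' 0 = 0.
Proof. intros h. unfold ext_index. destruct (Nat.ltb_spec 0 (nA c)); lia. Qed.

Lemma ext_index_link c c' : ext_index c c' (nA c) = nA c'.
Proof. unfold ext_index. destruct (Nat.ltb_spec (nA c) (nA c)); lia. Qed.

Lemma step_avoiding c F : valid c -> tau_nowhere_dense nb C P F ->
  exists c', valid c' /\ extends c c' /\ level c < level c' /\
    forall w, crealizes c' w -> ~ F (w 0) /\ ~ F (w (nA c')).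
Proof.
  intros hv hF.
  destruct (shrink_avoiding c F hv hF) as [c1 [hv1 [he1 [hl1 hav1]]]].
  destruct (shrink_avoiding (swap c1) F (valid_swap c1 hv1) hF) as [d [hvd [hed [hld havd]]]].
  assert (hv' : valid (swap d)) by (apply valid_swap; auto).
  assert (he' : extends c1 (swap d)) by (apply extends_swap; auto).
  exists (swap d). split; [exact hv'|].
  split; [eapply extends_trans; eauto|]. split; [simpl in *; lia|].
  intros w hw. pose proof hv1 as [_ [_ [_ [ha1 _]]]]. split.
  - pose proof (hav1 _ (extends_realizes c1 (swap d) w hv1 hv' he' hw)) as h.
    cbv beta in h. now rewrite ext_index_0 in h.
  - pose proof (realizes_swap (swap d) w hv' hw) as hs. rewrite swap_involutive in hs.
    pose proof (havd _ hs) as h. pose proof hvd as [_ [_ [_ [hda _]]]].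
    unfold swap_index in h. simpl in h. destruct (Nat.ltb_spec 0 (nA d)); [|lia].
    now rewrite Nat.add_0_r in h.
Qed.

Lemma avoiding_chain c0 (G : nat -> cset) :
  valid c0 -> (forall k, tau_nowhere_dense nb C P (G k)) ->
  exists cs : nat -> cond, cs 0 = c0 /\ forall k,
    valid (cs k) /\ extends (cs k) (cs (S k)) /\ level (cs k) < level (cs (S k)) /\
    forall w, crealizes (cs (S k)) w -> ~ G k (w 0) /\ ~ G k (w (nA (cs (S k)))).
Proof.
  intros hv0 hG.
  destruct (functional_choice (fun (kc : nat * cond) c' => valid (snd kc) ->
              valid c' /\ extends (snd kc) c' /\ level (snd kc) < level c' /\
              forall w, crealizes c' w -> ~ G (fst kc) (w 0) /\ ~ G (fst kc) (w (nA c'))))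
    as [next hnext].
  { intros [k c]. destruct (classic (valid c)) as [hv | hv].
    - destruct (step_avoiding c (G k) hv (hG k)) as [c' hc']. exists c'. auto.
    - exists c. simpl. tauto. }
  set (cs := fix cs k := match k with 0 => c0 | S k' => next (k', cs k') end).
  assert (hvalid : forall k, valid (cs k)).
  { induction k as [|k IH]; [exact hv0 | exact (proj1 (hnext (k, cs k) IH))]. }
  exists cs. split; [reflexivity|]. intro k. split; [apply hvalid|].
  exact (proj2 (hnext (k, cs k) (hvalid k))).
Qed.

Lemma ext_index_comp c1 c2 c3 j : extends c1 c2 ->
  ext_index c2 c3 (ext_index c1 c2 j) = ext_index c1 c3 j.
Proof.
  intros [_ [hA _]]. unfold ext_index.
  destruct (Nat.ltb_spec j (nA c1)).
  - destruct (Nat.ltb_spec j (nA c2)); [reflexivity | lia].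
  - destruct (Nat.ltb_spec (j - nA c1 + nA c2) (nA c2)); [lia|]. f_equal. lia.
Qed.

Lemma ext_index_self c j : ext_index c c j = j.
Proof. unfold ext_index. destruct (Nat.ltb_spec j (nA c)); lia. Qed.

Section Fusion.
Variable cs : nat -> cond.
Hypothesis cs_valid : forall k, valid (cs k).
Hypothesis cs_extends : forall k, extends (cs k) (cs (S k)).
Hypothesis cs_level : forall k, k <= level (cs k).

Lemma extends_chain k K : k <= K -> extends (cs k) (cs K).
Proof.
  induction K as [|K IH]; intros hkK.
  - replace k with 0 by lia. apply extends_refl.
  - destruct (Nat.eq_dec k (S K)) as [-> | hne]; [apply extends_refl|].
    apply (extends_trans _ (cs K)); [apply IH; lia | apply cs_extends].
Qed.

Lemma lt_nb_level t K : t < K -> t < nb (level (cs K)).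
Proof. intros htK. pose proof (cs_level K). pose proof (le_nb (level (cs K))). lia. Qed.

(* Coordinate [t] of the limit is read at stage [k + t + 1], after which it no longer changes. *)
Definition fusion k j t := cdata (cs (k + t + 1)) (ext_index (cs k) (cs (k + t + 1)) j) t.

Lemma fusion_agree k K j : k <= K -> j < csize (cs k) ->
  agree (nb (level (cs K))) (fusion k j) (cdata (cs K) (ext_index (cs k) (cs K) j)).
Proof.
  intros hkK hj t ht. unfold fusion. set (K' := k + t + 1).
  destruct (le_lt_dec K K') as [hle | hlt].
  - pose proof (extends_chain K K' hle) as hext.
    rewrite <- (ext_index_comp (cs k) (cs K) (cs K')) by (apply extends_chain; auto).
    apply (extends_data _ _ _ hext); [|exact ht].
    apply ext_index_lt; auto. apply extends_chain; auto.
  - pose proof (extends_chain K' K ltac:(lia)) as hext. symmetry.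
    rewrite <- (ext_index_comp (cs k) (cs K') (cs K)) by (apply extends_chain; unfold K'; lia).
    apply (extends_data _ _ _ hext).
    + apply ext_index_lt; auto. apply extends_chain. unfold K'. lia.
    + apply lt_nb_level. unfold K'. lia.
Qed.

Lemma fusion_realizes k : crealizes (cs k) (fusion k).
Proof.
  split; [|split].
  - intros j hj i. set (K := k + i + 1).
    assert (hkK : k <= K) by (unfold K; lia).
    pose proof (cs_valid K) as [[_ [_ [_ [hacc _]]]] _].
    apply (memC_agree i (nb (level (cs K))) (cdata (cs K) (ext_index (cs k) (cs K) j))).
    + apply nb_le_mono. pose proof (cs_level K). unfold K in *. lia.
    + apply agree_sym, fusion_agree; auto.
    + apply hacc; [apply ext_index_lt; auto; apply extends_chain; auto|].
      pose proof (cs_level K). unfold K in *. lia.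
  - intros j hj. pose proof (fusion_agree k k j (le_n k) hj) as h.
    now rewrite ext_index_self in h.
  - intros j hj. set (K := k + j).
    assert (hkK : k <= K) by (unfold K; lia).
    pose proof (cs_valid k) as hvk. pose proof hvk as [hsk [tA [tB [ha hb]]]].
    pose proof hsk as [_ [_ [hle _]]].
    pose proof (nb_le_mono (level (cs k)) j ltac:(lia)).
    pose proof (nb_le_mono j (level (cs K)) ltac:(pose proof (cs_level K); unfold K in *; lia)).
    apply (inS_lower_level _ _ _ (level (cs K)));
      [| pose proof (cs_level K); unfold K in *; lia | lia].
    apply (inS_transport _ _ _ _ _ _ (fun j => j) _
             (extends_inS (cs k) (cs K) hvk (cs_valid K) (extends_chain k K hkK))); auto.
    + apply cond_tree; auto.
    + unfold csize. lia.
    + lia.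
    + intros k' l m' he. auto.
    + intros j' hj'. apply fusion_agree; auto.
Qed.

Lemma fusion_index k K j : k <= K -> j < csize (cs k) ->
  fusion K (ext_index (cs k) (cs K) j) = fusion k j.
Proof.
  intros hkK hj. apply functional_extensionality. intro t.
  unfold fusion at 1. rewrite ext_index_comp by (apply extends_chain; auto).
  symmetry. apply fusion_agree; [lia | exact hj | apply lt_nb_level; lia].
Qed.
End Fusion.

Lemma generic_pair nn pi s i x (G : nat -> cset) :
  inS nb C P nn pi s i -> U nb C P nn pi s i x -> (forall k, tau_nowhere_dense nb C P (G k)) ->
  exists b1 b2, U nb C P nn pi s i b1 /\ U nb C P nn pi s i b2 /\
    (forall k, ~ G k b1 /\ ~ G k b2) /\ b1 <> b2 /\ forall N, inTstar P m N (cadd b1 b2).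
Proof.
  intros hs hx hG.
  destruct (cond_of_basic _ _ _ _ _ hs hx) as [ci [hvi hUi]].
  destruct (separate ci hvi) as [c0 [hv0 [he0 hsep]]].
  destruct (avoiding_chain c0 G hv0 hG) as [cs [hcs0 hcs]].
  assert (hvalid : forall k, valid (cs k)) by (intro k; apply hcs).
  assert (hext : forall k, extends (cs k) (cs (S k))) by (intro k; apply hcs).
  assert (hlevel : forall k, k <= level (cs k)).
  { induction k as [|k IH]; [lia|]. destruct (hcs k) as [_ [_ [hlt _]]]. lia. }
  pose proof (fusion_realizes cs hvalid hext hlevel) as hfus.
  pose proof hv0 as [_ [_ [_ [ha0 _]]]]. subst c0.
  assert (hsize : 0 < csize (cs 0) /\ nA (cs 0) < csize (cs 0))
    by (pose proof hv0 as [_ [_ [_ [_ hb]]]]; unfold csize; lia).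
  assert (hroot : forall k, fusion cs k 0 = fusion cs 0 0).
  { intro k. rewrite <- (fusion_index cs hext hlevel 0 k 0); [| lia | apply hsize].
    now rewrite ext_index_0. }
  assert (hlink : forall k, fusion cs k (nA (cs k)) = fusion cs 0 (nA (cs 0))).
  { intro k. rewrite <- (fusion_index cs hext hlevel 0 k (nA (cs 0))); [| lia | apply hsize].
    now rewrite ext_index_link. }
  exists (fusion cs 0 0), (fusion cs 0 (nA (cs 0))).
  pose proof (hUi _ (extends_realizes ci (cs 0) _ hvi hv0 he0 (hfus 0))) as [hU1 hU2].
  cbv beta in hU1, hU2. rewrite ext_index_0 in hU1 by (destruct hvi as [_ [_ [_ [? _]]]]; auto).
  rewrite ext_index_link in hU2.
  split; [exact hU1 | split; [exact hU2 | split; [| split]]].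
  - intro k. destruct (hcs k) as [_ [_ [_ havoid]]].
    destruct (havoid _ (hfus (S k))) as [h1 h2]. rewrite hroot in h1. rewrite hlink in h2. auto.
  - exact (hsep _ (hfus 0)).
  - intro N. apply (inTstar_le _ _ (nb (S (N + level (cs 0))))).
    + pose proof (le_nb (S (N + level (cs 0)))). lia.
    + apply (realizes_edge_link (cs 0) _ _ (hfus 0)). lia.
Qed.

End Construction.

Lemma nonmeager_baire_basic_open nb C P (B : cset) :
  ~ tau_meager nb C P B -> tau_baire_property nb C P B ->
  exists nn pi s i x (G : nat -> cset),
    inS nb C P nn pi s i /\ U nb C P nn pi s i x /\ (forall k, tau_nowhere_dense nb C P (G k)) /\
    forall b, U nb C P nn pi s i b -> (forall k, ~ G k b) -> B b.
Proof.
  intros hnm [O [[_ hbasic] [G [hG hsym]]]].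
  assert (hO : exists x, O x).
  { apply NNPP. intro hno. apply hnm. exists G. split; auto.
    intros x hx. apply hsym. left. split; eauto. }
  destruct hO as [x hx]. destruct (hbasic x hx) as [nn [pi [s [i [hs [hU hsub]]]]]].
  exists nn, pi, s, i, x, G. split; [exact hs | split; [exact hU | split; [exact hG|]]].
  intros b hb hnG. apply NNPP. intro hnb. destruct (hsym b) as [k hk].
  - right. split; auto.
  - exact (hnG k hk).
Qed.

Lemma translates_meet (B : cset) b1 b2 p q : B b1 -> B b2 -> cadd p q = cadd b1 b2 ->
  exists z, translate B p z /\ translate B q z.
Proof.
  intros h1 h2 hsum. exists (cadd b1 p). split; [now exists b1|].
  exists b2. split; auto. apply functional_extensionality. intro t.
  apply (f_equal (fun x => x t)) in hsum. unfold cadd in *.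
  destruct (b1 t), (b2 t), (p t), (q t); simpl in *; congruence.
Qed.

Lemma cadd_neq p q b1 b2 : cadd p q = cadd b1 b2 -> b1 <> b2 -> p <> q.
Proof.
  intros hsum hne ->. apply hne. rewrite (cadd_self q b1) in hsum.
  apply functional_extensionality. intro t. apply (f_equal (fun x => x t)) in hsum.
  unfold cadd in hsum. destruct (b1 t), (b2 t); simpl in hsum; congruence.
Qed.

Theorem proposition2p7
  (nb : nat -> nat) (C : nat -> cset) (P : nat -> cset)
  (hn0 : nb 0 = 0)
  (hninc : forall i, nb i < nb (S i))
  (hCin : forall (i : nat) (s : nat -> cantor),
      exists t, forall k, k <= nb i -> memC nb C i (cadd t (s k)))
  (hCout : forall (i : nat) (s : nat -> cantor),
      exists t, forall k, k <= nb i -> ~ memC nb C i (cadd t (s k)))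
  (hP : forall m, perfect_nonempty (P m))
  (B : cset)
  (hBH : subset B (H nb C))
  (hBnm : ~ tau_meager nb C P B)
  (hBbp : tau_baire_property nb C P B) :
  forall m, exists x y, P m x /\ P m y /\ x <> y /\
    exists z, translate B x z /\ translate B y z.
Proof.
  intros m.
  destruct (nonmeager_baire_basic_open nb C P B hBnm hBbp)
    as [nn [pi [s [i [x [G [hs [hx [hG hB]]]]]]]]].
  destruct (generic_pair nb C P hninc hCin hP m nn pi s i x G hs hx hG)
    as [b1 [b2 [hb1 [hb2 [hnG [hne happrox]]]]]].
  destruct (hP m) as [_ [hclosed _]].
  destruct (closed_sum_of_approx (P m) (cadd b1 b2) hclosed) as [p [q [hp [hq hsum]]]].
  { intro N. destruct (happrox N) as [z [[p [q [hp [hq ->]]]] hz]]. eauto. }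
  exists p, q. split; [exact hp | split; [exact hq | split]].
  - exact (cadd_neq _ _ _ _ hsum hne).
  - apply (translates_meet B b1 b2); auto.
    + apply hB; auto. intro k. apply hnG.
    + apply hB; auto. intro k. apply hnG.
Qed.
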